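(* Let $\phi$ be a continuous flow on a compact metric space $X$, and let $Exp(\phi)$ be the set of uniformly-expansive points of $\phi$. Then $Exp(\phi)$ is invariant: $\phi^t(Exp(\phi))\subset Exp(\phi)$ for every $t\in\mathbb{R}$.
   Context: A continuous flow is a continuous map $\phi:\mathbb{R}\times X\to X$, $\phi^t(x)=\phi(t,x)$, with $\phi^0=\mathrm{id}$, $\phi^{t+s}=\phi^s\circ\phi^t$; $O(x)=\{\phi^t(x):t\in\mathbb{R}\}$. A reparametrization is an increasing homeomorphism $h:\mathbb{R}\to\mathbb{R}$ with $h(0)=0$. A point $x$ is uniformly-expansive if there is a neighborhood $U$ of $x$ such that for every $\varepsilon>0$ there is $\delta>0$ such that whenever $y,z\in U$ and some reparametrization $h$ satisfies $d(\phi^t(y),\phi^{h(t)}(z))<\delta$ for all $t\in\mathbb{R}$, then $y=\phi^s(w)$ with $w\in O(z)$ and $|s|<\varepsilon$. *)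

From Stdlib Require Import Reals List.
Open Scope R_scope.

Record is_metric {X : Type} (d : X -> X -> R) : Prop := {
  metric_nonneg : forall x y, 0 <= d x y;
  metric_eq0 : forall x y, d x y = 0 <-> x = y;
  metric_sym : forall x y, d x y = d y x;
  metric_triangle : forall x y z, d x z <= d x y + d y z }.

Definition mball {X : Type} (d : X -> X -> R) (x : X) (r : R) : X -> Prop :=
  fun y => d x y < r.

Definition metric_open {X : Type} (d : X -> X -> R) (U : X -> Prop) : Prop :=
  forall x, U x -> exists r, 0 < r /\ forall y, mball d x r y -> U y.

Definition metric_compact {X : Type} (d : X -> X -> R) : Prop :=
  forall (I : Type) (U : I -> X -> Prop),
    (forall i, metric_open d (U i)) ->
    (forall x, exists i, U i x) ->
    exists l : list I, forall x, exists i, In i l /\ U i x.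

Definition neighborhood {X : Type} (d : X -> X -> R) (x : X) (U : X -> Prop) : Prop :=
  exists V, metric_open d V /\ V x /\ forall y, V y -> U y.

(* continuous flow phi : R x X -> X, phi t x = phi^t(x); joint continuity
   w.r.t. the product topology of R x X *)
Definition continuous_flow {X : Type} (d : X -> X -> R) (phi : R -> X -> X) : Prop :=
  (forall t x eps, 0 < eps -> exists del, 0 < del /\
     forall s y, Rabs (s - t) < del -> d x y < del -> d (phi t x) (phi s y) < eps) /\
  (forall x, phi 0 x = x) /\
  (forall t s x, phi (t + s) x = phi s (phi t x)).

Definition orbit {X : Type} (phi : R -> X -> X) (x : X) : X -> Prop :=
  fun y => exists t, y = phi t x.

Definition reparametrization (h : R -> R) : Prop :=
  (forall a b, a < b -> h a < h b) /\
  continuity h /\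
  (forall y, exists a, h a = y) /\
  h 0 = 0.

Definition uniformly_expansive {X : Type} (d : X -> X -> R) (phi : R -> X -> X) (x : X) : Prop :=
  exists U, neighborhood d x U /\
    forall eps, 0 < eps -> exists del, 0 < del /\
      forall y z h, U y -> U z -> reparametrization h ->
        (forall t, d (phi t y) (phi (h t) z) < del) ->
        exists s w, orbit phi z w /\ Rabs s < eps /\ y = phi s w.

(* The inverse [phi^(-t)] of [phi^t] commutes with the flow and, [X] being
   compact, is uniformly continuous.  Hence a neighborhood [U] of [x] witnessing
   uniform expansivity pulls back to the neighborhood [phi^(-t)]^-1(U) of
   [phi^t x], and a [delta']-shadowing pair near [phi^t x] is mapped by
   [phi^(-t)] to a [delta]-shadowing pair in [U]; the orbit relation obtained
   there is carried back by [phi^t]. *)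
From Stdlib Require Import Reals List Lra.
Open Scope R_scope.

Definition metric_continuous {X Y : Type} (dX : X -> X -> R) (dY : Y -> Y -> R)
    (f : X -> Y) : Prop :=
  forall x eps, 0 < eps -> exists del, 0 < del /\
    forall y, dX x y < del -> dY (f x) (f y) < eps.

Definition metric_uniformly_continuous {X Y : Type} (dX : X -> X -> R)
    (dY : Y -> Y -> R) (f : X -> Y) : Prop :=
  forall eps, 0 < eps -> exists del, 0 < del /\
    forall a b, dX a b < del -> dY (f a) (f b) < eps.

Lemma uniformly_continuous_continuous {X Y : Type} (dX : X -> X -> R)
    (dY : Y -> Y -> R) (f : X -> Y) :
  metric_uniformly_continuous dX dY f -> metric_continuous dX dY f.
Proof.
  intros Hf x eps Heps.
  destruct (Hf eps Heps) as [del [Hdel Hf']].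
  exists del; split; auto.
Qed.

Lemma metric_open_preimage {X Y : Type} (dX : X -> X -> R) (dY : Y -> Y -> R)
    (f : X -> Y) (V : Y -> Prop) :
  metric_continuous dX dY f -> metric_open dY V -> metric_open dX (fun x => V (f x)).
Proof.
  intros Hf HV x Hx.
  destruct (HV (f x) Hx) as [r [Hr Hball]].
  destruct (Hf x r Hr) as [del [Hdel Hf']].
  exists del; split; auto.
  intros y Hy; apply Hball, Hf', Hy.
Qed.

Lemma neighborhood_preimage {X Y : Type} (dX : X -> X -> R) (dY : Y -> Y -> R)
    (f : X -> Y) (x : X) (U : Y -> Prop) :
  metric_continuous dX dY f -> neighborhood dY (f x) U ->
  neighborhood dX x (fun y => U (f y)).
Proof.
  intros Hf [V [HVopen [HVx HVU]]].
  exists (fun y => V (f y)); repeat split; auto.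
  apply (metric_open_preimage dX dY); auto.
Qed.

Lemma metric_refl {X : Type} (d : X -> X -> R) (x : X) : is_metric d -> d x x = 0.
Proof. intros Hd; apply (metric_eq0 d Hd); reflexivity. Qed.

Lemma mball_open {X : Type} (d : X -> X -> R) (x : X) (r : R) :
  is_metric d -> metric_open d (mball d x r).
Proof.
  intros Hd y Hy; unfold mball in *.
  exists (r - d x y); split; [lra |].
  intros z Hz; pose proof (metric_triangle d Hd x y z); lra.
Qed.

Lemma list_min_pos {I : Type} (r : I -> R) (l : list I) :
  (forall i, 0 < r i) -> exists del, 0 < del /\ forall i, In i l -> del <= r i.
Proof.
  intros Hr; induction l as [| j l [del [Hdel Hle]]].
  - exists 1; split; [lra | intros i []].
  - exists (Rmin (r j) del); split.
    + apply Rmin_glb_lt; auto.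
    + intros i [<- | Hi].
      * apply Rmin_l.
      * eapply Rle_trans; [apply Rmin_r | auto].
Qed.

(* Cover [X] by the balls [B(p, r/2)] with [r] an [eps/2]-continuity radius at
   [p]; the minimum radius of a finite subcover is a uniform [del]. *)
Lemma compact_uniformly_continuous {X Y : Type} (dX : X -> X -> R)
    (dY : Y -> Y -> R) (f : X -> Y) :
  is_metric dX -> is_metric dY -> metric_compact dX ->
  metric_continuous dX dY f -> metric_uniformly_continuous dX dY f.
Proof.
  intros HdX HdY Hcompact Hf eps Heps.
  set (I := {pr : X * R | 0 < snd pr /\
              forall y, dX (fst pr) y < snd pr -> dY (f (fst pr)) (f y) < eps / 2}).
  set (center := fun i : I => fst (proj1_sig i)).
  set (radius := fun i : I => snd (proj1_sig i)).
  destruct (Hcompact I (fun i => mball dX (center i) (radius i / 2))) as [l Hl].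
  - intros i; apply mball_open, HdX.
  - intros x.
    destruct (Hf x (eps / 2)) as [r [Hr Hfx]]; [lra |].
    exists (exist _ (x, r) (conj Hr Hfx)).
    unfold mball, center, radius; simpl; rewrite metric_refl by exact HdX; lra.
  - destruct (list_min_pos (fun i => radius i / 2) l) as [del [Hdel Hle]].
    { intros i; unfold radius; destruct (proj2_sig i) as [Hr _]; lra. }
    exists del; split; auto.
    intros a b Hab.
    destruct (Hl a) as [i [Hin Ha]].
    specialize (Hle i Hin).
    destruct i as [[p r] [Hr Hfp]]; unfold mball, center, radius in *; simpl in *.
    pose proof (metric_triangle dX HdX p a b).
    pose proof (Hfp a ltac:(lra)); pose proof (Hfp b ltac:(lra)).
    pose proof (metric_triangle dY HdY (f a) (f p) (f b)).
    rewrite (metric_sym dY HdY (f a) (f p)) in *; lra.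
Qed.

Section EquivariantInvariance.

Variables (X : Type) (d : X -> X -> R) (phi : R -> X -> X).
Variables (g g' : X -> X).
Hypothesis g_g' : forall y, g (g' y) = y.
Hypothesis g'_g : forall x, g' (g x) = x.
Hypothesis phi_g : forall u w, phi u (g w) = g (phi u w).
Hypothesis g'_unif : metric_uniformly_continuous d d g'.

Lemma phi_g' (u : R) (w : X) : phi u (g' w) = g' (phi u w).
Proof. rewrite <- (g_g' w) at 2; rewrite phi_g, g'_g; reflexivity. Qed.

Lemma orbit_equivariant (z w : X) : orbit phi (g' z) w -> orbit phi z (g w).
Proof. intros [r ->]; exists r; rewrite <- phi_g, g_g'; reflexivity. Qed.

Lemma uniformly_expansive_equivariant (x : X) :
  uniformly_expansive d phi x -> uniformly_expansive d phi (g x).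
Proof.
  intros [U [HUx HU]].
  exists (fun y => U (g' y)); split.
  - apply (neighborhood_preimage d d).
    + apply uniformly_continuous_continuous, g'_unif.
    + rewrite g'_g; exact HUx.
  - intros eps Heps.
    destruct (HU eps Heps) as [del [Hdel Hexp]].
    destruct (g'_unif del Hdel) as [del' [Hdel' Hg']].
    exists del'; split; auto.
    intros y z h Hy Hz Hh Hshadow.
    destruct (Hexp (g' y) (g' z) h Hy Hz Hh) as [s [w [Hw [Hs Hyw]]]].
    { intros u; rewrite !phi_g'; apply Hg', Hshadow. }
    exists s, (g w); repeat split; auto.
    + apply orbit_equivariant, Hw.
    + rewrite phi_g, <- Hyw, g_g'; reflexivity.
Qed.

End EquivariantInvariance.

Section Flow.

Variables (X : Type) (d : X -> X -> R) (phi : R -> X -> X).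
Hypothesis flow : continuous_flow d phi.

Lemma flow_comm (t s : R) (x : X) : phi s (phi t x) = phi t (phi s x).
Proof.
  destruct flow as [_ [_ Hadd]].
  rewrite <- !Hadd, Rplus_comm; reflexivity.
Qed.

Lemma flow_inv (t : R) (x : X) : phi (- t) (phi t x) = x.
Proof.
  destruct flow as [_ [H0 Hadd]].
  rewrite <- Hadd, Rplus_opp_r; apply H0.
Qed.

Lemma flow_inv_r (t : R) (x : X) : phi t (phi (- t) x) = x.
Proof. rewrite <- (Ropp_involutive t) at 1; apply flow_inv. Qed.

Lemma flow_continuous (t : R) : metric_continuous d d (phi t).
Proof.
  intros x eps Heps.
  destruct (proj1 flow t x eps Heps) as [del [Hdel Hc]].
  exists del; split; auto.
  intros y Hy; apply Hc; auto.
  rewrite Rminus_diag, Rabs_R0; exact Hdel.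
Qed.

End Flow.

Theorem mainTheorem4 (X : Type) (d : X -> X -> R) (phi : R -> X -> X) :
  is_metric d -> metric_compact d -> continuous_flow d phi ->
  forall (t : R) (x : X), uniformly_expansive d phi x ->
    uniformly_expansive d phi (phi t x).
Proof.
  intros Hd Hcompact Hflow t x Hx.
  apply (uniformly_expansive_equivariant X d phi (phi t) (phi (- t))); auto.
  - exact (flow_inv_r X d phi Hflow t).
  - exact (flow_inv X d phi Hflow t).
  - exact (flow_comm X d phi Hflow t).
  - apply compact_uniformly_continuous; auto.
    exact (flow_continuous X d phi Hflow (- t)).
Qed.
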